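(* Let $\tau_1,\tau_c,\tau_s>0$ with $\tau_1+\tau_c+\tau_s=1$ and $1\gg\tau_c/\tau_1>\tau_s/\tau_1>0$. Let $$\eta_uA^{(u)}=\begin{bmatrix}a&2\tau_1\tau_s&2\tau_1\tau_c&2\tau_c\tau_s&0&0\\2\tau_1\tau_s&a&2\tau_c\tau_s&2\tau_1\tau_c&0&0\\2\tau_1\tau_c&2\tau_c\tau_s&a&2\tau_1\tau_s&0&0\\2\tau_c\tau_s&2\tau_1\tau_c&2\tau_1\tau_s&a&0&0\\0&0&0&0&2\tau_1^2&2\tau_1^2\\0&0&0&0&2\tau_1^2&2\tau_1^2\end{bmatrix},\quad a=\tau_1^2+\tau_s^2+\tau_c^2,$$ let $D^{(u)}$ be the diagonal matrix of row sums of $\eta_uA^{(u)}$, and let $\lambda_1^{(u)}\ge\lambda_2^{(u)}\ge\lambda_3^{(u)}$ be the three largest eigenvalues of $D^{(u)-1/2}(\eta_uA^{(u)})D^{(u)-1/2}$ with eigenvectors $v_1^{(u)},v_2^{(u)},v_3^{(u)}$. Set $\hat\lambda_1^{(u)}=1,\ \hat\lambda_2^{(u)}=1,\ \hat\lambda_3^{(u)}=1-4\frac{\tau_s}{\tau_1}$ and $\hat v_1^{(u)}=[0,0,0,0,1,1]$, $\hat v_2^{(u)}=[1,1,1,1,0,0]$, $\hat v_3^{(u)}=[1,-1,1,-1,0,0]$. Then for $i\in\{1,2,3\}$, $|\lambda_i^{(u)}-\hat\lambda_i^{(u)}|\le O((\tau_c/\tau_1)^2)$, and $\|\sin(U^{(u)},\hat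 U^{(u)})\|_F\le O\big(\frac{\tau_c^2}{\tau_1(\tau_c-\tau_s)}\big)$, where $U^{(u)}=[v_1^{(u)},v_2^{(u)},v_3^{(u)}]$ and $\hat U^{(u)}=[\hat v_1^{(u)},\hat v_2^{(u)},\hat v_3^{(u)}]$.
   Context: $\sin(U,\hat U)$ denotes the matrix of sines of the principal angles between the column spaces of $U$ and $\hat U$ (subspace distance between matrices with orthonormalized columns). The $O(\cdot)$ bounds refer to the regime $\tau_c/\tau_1\to0$. *)

From HB Require Import structures.
From mathcomp Require Import all_boot all_order all_algebra.
Set Implicit Arguments. Unset Strict Implicit. Unset Printing Implicit Defensive.
Import Order.TTheory GRing.Theory Num.Theory.
Local Open Scope ring_scope.

Section Defs.
Variable R : rcfType.

Definition etaA_entry (t1 tc ts : R) (i j : nat) : R :=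
  let a := t1 ^+ 2 + ts ^+ 2 + tc ^+ 2 in
  match i, j with
  | 0, 0 | 1, 1 | 2, 2 | 3, 3 => a
  | 0, 1 | 1, 0 | 2, 3 | 3, 2 => 2 * t1 * ts
  | 0, 2 | 2, 0 | 1, 3 | 3, 1 => 2 * t1 * tc
  | 0, 3 | 3, 0 | 1, 2 | 2, 1 => 2 * tc * ts
  | 4, 4 | 4, 5 | 5, 4 | 5, 5 => 2 * t1 ^+ 2
  | _, _ => 0
  end.

Definition etaA (t1 tc ts : R) : 'M[R]_6 :=
  \matrix_(i < 6, j < 6) etaA_entry t1 tc ts i j.

Definition Dinvsqrt (A : 'M[R]_6) : 'M[R]_6 :=
  diag_mx (\row_(i < 6) (Num.sqrt (\sum_(j < 6) A i j))^-1).

Definition normA (t1 tc ts : R) : 'M[R]_6 :=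
  Dinvsqrt (etaA t1 tc ts) *m etaA t1 tc ts *m Dinvsqrt (etaA t1 tc ts).

Definition hatlam (t1 ts : R) (i : 'I_3) : R :=
  match val i with 0 | 1 => 1 | _ => 1 - 4 * (ts / t1) end.

Definition hatU_entry (i j : nat) : R :=
  match j, i with
  | 0, 4 | 0, 5 => 1
  | 1, 0 | 1, 1 | 1, 2 | 1, 3 => 1
  | 2, 0 | 2, 2 => 1
  | 2, 1 | 2, 3 => -1
  | _, _ => 0
  end.
Definition hatU : 'M[R]_(6, 3) := \matrix_(i < 6, j < 3) hatU_entry i j.

(* normalize each column to unit Euclidean norm; since the columns of hatU are
   mutually orthogonal, this is its (Gram-Schmidt) orthonormalization *)
Definition normcols n k (M : 'M[R]_(n, k)) : 'M[R]_(n, k) :=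
  \matrix_(i < n, j < k) (M i j / Num.sqrt (\sum_(l < n) M l j ^+ 2)).

Definition top3 (V : 'M[R]_6) : 'M[R]_(6, 3) :=
  \matrix_(i < 6, j < 3) V i (widen_ord (isT : (3 <= 6)%N) j).

(* ||sin(U, W)||_F for U, W with orthonormal columns spanning k-dim spaces:
   the cosines of the principal angles are the singular values s_i of U^T W,
   so ||sin Theta||_F^2 = sum_i (1 - s_i^2) = k - ||U^T W||_F^2. *)
Definition sinF n k (U W : 'M[R]_(n, k)) : R :=
  Num.sqrt (k%:R - \sum_(i < k) \sum_(j < k) ((U^T *m W) i j) ^+ 2).

End Defs.

(** The normalised matrix is diagonalised exactly by an explicit orthonormal
    basis: its upper 4x4 block is a group matrix of the Klein four-group, whose
    characters are therefore eigenvectors, and its lower block is a multiple of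
    the all-ones 2x2 matrix.  Its spectrum 1, 1, (t1+tc-ts)^2, (t1+ts-tc)^2,
    (t1-ts-tc)^2, 0 is nonincreasing, with a strict gap after the third
    eigenvalue, as soon as ts < tc < t1.  Eigenvalue multiplicities do not
    depend on the orthonormal eigenbasis, so every sorted eigendecomposition has
    exactly this spectrum, and because of the gap its three leading eigenvectors
    span the same space as the explicit ones: the sin-Theta distance is 0.  The
    only error left is |(1-2ts)^2 - (1-4ts/t1)| = 4ts^2 + 4ts(tc+ts)/t1, which is
    at most 12 (tc/t1)^2. *)

From HB Require Import structures.
From mathcomp Require Import all_boot all_order all_algebra.
From mathcomp Require Import ring lra.
Set Implicit Arguments.
Unset Strict Implicit.
Unset Printing Implicit Defensive.
Import Order.TTheory GRing.Theory Num.Theory.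
Local Open Scope ring_scope.

Section SortedSpectrum.
Variables (R : realFieldType) (n : nat).
Implicit Types (C M P V : 'M[R]_n) (mu lam : 'rV[R]_n).

Definition nonincreasing_row (r : 'rV[R]_n) :=
  forall i j : 'I_n, (i <= j)%N -> r 0 j <= r 0 i.

Lemma sum_sqr_row C i : C *m C^T = 1%:M -> \sum_j C i j ^+ 2 = 1.
Proof.
move/matrixP/(_ i i); rewrite !mxE eqxx mulr1n => <-.
by apply: eq_bigr => j _; rewrite !mxE expr2.
Qed.

Lemma sum_sqr_col C j : C^T *m C = 1%:M -> \sum_i C i j ^+ 2 = 1.
Proof.
move=> CtC; rewrite -(@sum_sqr_row (C^T) j) ?trmxK //.
by apply: eq_bigr => i _; rewrite mxE.
Qed.

Lemma orthonormal_trmx_mul P V :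
  P^T *m P = 1%:M -> V^T *m V = 1%:M -> (P^T *m V)^T *m (P^T *m V) = 1%:M.
Proof.
move=> PtP VtV.
by rewrite trmx_mul trmxK mulmxA -(mulmxA V^T) (mulmx1C PtP) mulmx1.
Qed.

Lemma eigenbasis_intertwine M P V mu lam :
  P^T *m P = 1%:M -> M *m P = P *m diag_mx mu -> M *m V = V *m diag_mx lam ->
  diag_mx mu *m (P^T *m V) = (P^T *m V) *m diag_mx lam.
Proof.
move=> PtP MP MV.
have PtM : P^T *m M = diag_mx mu *m P^T.
  by rewrite -[LHS]mulmx1 -(mulmx1C PtP) mulmxA -(mulmxA P^T) MP mulmxA PtP mul1mx.
by rewrite mulmxA -PtM -mulmxA MV mulmxA.
Qed.

Lemma intertwine_eigenvalue C mu lam i j :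
  diag_mx mu *m C = C *m diag_mx lam -> C i j != 0 -> lam 0 j = mu 0 i.
Proof.
move/matrixP/(_ i j); rewrite mul_diag_mx mul_mx_diag !mxE => e nz.
by apply: (mulIf nz); rewrite mulrC -e.
Qed.

(* Both counts are the squared mass of C on the block [mu = c] x [lam = c],
   since C vanishes outside the blocks where the eigenvalues match. *)
Lemma count_intertwined_eigenvalue C mu lam c :
  C^T *m C = 1%:M -> diag_mx mu *m C = C *m diag_mx lam ->
  count_mem c [seq mu 0 i | i <- enum 'I_n] =
  count_mem c [seq lam 0 j | j <- enum 'I_n].
Proof.
move=> CtC hD; have CCt := mulmx1C CtC.
have C0 i j : lam 0 j != mu 0 i -> C i j = 0.
  by apply: contraNeq => /(intertwine_eigenvalue hD) ->; rewrite eqxx.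
apply/eqP; rewrite -(eqr_nat R) !count_map -!sum1_count !natr_sum; apply/eqP.
transitivity (\sum_(i | mu 0 i == c) \sum_(j | lam 0 j == c) C i j ^+ 2).
  apply: eq_bigr => i /eqP mui.
  rewrite -(sum_sqr_row i CCt) (bigID (fun j => lam 0 j == c)) /=.
  by rewrite [X in _ + X]big1 ?addr0 // => j ljc; rewrite C0 ?expr0n // mui.
rewrite exchange_big /=; apply: eq_bigr => j /eqP ljc.
rewrite -(sum_sqr_col j CtC) [RHS](bigID (fun i => mu 0 i == c)) /=.
by rewrite [X in _ = _ + X]big1 ?addr0 // => i mic; rewrite C0 ?expr0n // ljc eq_sym.
Qed.

Lemma sorted_nonincreasing_row (r : 'rV[R]_n) :
  nonincreasing_row r -> sorted >=%R [seq r 0 i | i <- enum 'I_n].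
Proof.
move=> r_dec; rewrite sorted_map; apply: (@sub_sorted _ (relpre val leq)).
  by move=> i j; apply: r_dec.
by rewrite -sorted_map val_enum_ord iota_sorted.
Qed.

Theorem sorted_eigenvalues_unique M P V mu lam :
  P^T *m P = 1%:M -> V^T *m V = 1%:M ->
  M *m P = P *m diag_mx mu -> M *m V = V *m diag_mx lam ->
  nonincreasing_row mu -> nonincreasing_row lam -> lam = mu.
Proof.
move=> PtP VtV MP MV mu_dec lam_dec.
have CtC := orthonormal_trmx_mul PtP VtV.
have hD := eigenbasis_intertwine PtP MP MV.
have perm_spec : perm_eq [seq lam 0 j | j <- enum 'I_n] [seq mu 0 i | i <- enum 'I_n].
  by apply/allP => c _; rewrite /= (count_intertwined_eigenvalue c CtC hD).
have /eq_in_map eq_spec := sorted_eq (@ge_trans _ R) (@ge_anti _ R)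
  (sorted_nonincreasing_row lam_dec) (sorted_nonincreasing_row mu_dec) perm_spec.
by apply/rowP => j; rewrite eq_spec ?mem_enum.
Qed.

End SortedSpectrum.

Section LeadingEigenspace.
Variables (R : rcfType) (n k : nat) (le_kn : (k <= n)%N).
Implicit Types (M P V : 'M[R]_n) (mu : 'rV[R]_n).

Definition leftcols (V : 'M[R]_n) : 'M[R]_(n, k) :=
  \matrix_(i < n, j < k) V i (widen_ord le_kn j).

Lemma sinF_leftcols_eq0 P V :
  P^T *m P = 1%:M -> V^T *m V = 1%:M ->
  (forall i j : 'I_n, (k <= i)%N -> (j < k)%N -> (P^T *m V) i j = 0) ->
  sinF (leftcols V) (leftcols P) = 0.
Proof.
move=> PtP VtV C0; set C := P^T *m V.
have CtC : C^T *m C = 1%:M := orthonormal_trmx_mul PtP VtV.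
have col_mass (a : 'I_k) :
    \sum_(b < k) ((leftcols V)^T *m leftcols P) a b ^+ 2 = 1.
  rewrite -(sum_sqr_col (widen_ord le_kn a) CtC).
  rewrite [RHS](bigID (fun i : 'I_n => (i < k)%N)) /=.
  rewrite [X in _ = _ + X]big1 ?addr0; last first.
    by move=> i; rewrite -leqNgt => ki; rewrite C0 ?expr0n //=.
  rewrite (big_ord_narrow le_kn (F := fun i => C i (widen_ord le_kn a) ^+ 2)) /=.
  apply: eq_bigr => b _; congr (_ ^+ 2).
  by rewrite !mxE; apply: eq_bigr => l _; rewrite !mxE mulrC.
rewrite /sinF (eq_bigr _ (fun a _ => col_mass a)) sumr_const card_ord.
by rewrite subrr sqrtr0.
Qed.

Theorem leading_eigenspace_sinF_eq0 M P V mu :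
  P^T *m P = 1%:M -> V^T *m V = 1%:M ->
  M *m P = P *m diag_mx mu -> M *m V = V *m diag_mx mu ->
  (forall i j : 'I_n, (k <= i)%N -> (j < k)%N -> mu 0 i < mu 0 j) ->
  sinF (leftcols V) (leftcols P) = 0.
Proof.
move=> PtP VtV MP MV gap; apply: sinF_leftcols_eq0 => // i j ki jk.
have hD := eigenbasis_intertwine PtP MP MV.
by apply: contraTeq (gap i j ki jk) => /(intertwine_eigenvalue hD) ->; rewrite ltxx.
Qed.

End LeadingEigenspace.

Section NormalizedAffinity.
Variable R : rcfType.

Definition isqrt2 : R := (Num.sqrt 2)^-1.

Lemma isqrt2_sqr : isqrt2 * isqrt2 = 2^-1.
Proof. by rewrite -expr2 /isqrt2 exprVn sqr_sqrtr ?ler0n. Qed.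

Definition eigbasis_entry (i j : nat) : R :=
  match j, i with
  | 0, 4 | 0, 5 => isqrt2
  | 1, 0 | 1, 1 | 1, 2 | 1, 3 => 2^-1
  | 2, 0 | 2, 2 => 2^-1 | 2, 1 | 2, 3 => - 2^-1
  | 3, 0 | 3, 1 => 2^-1 | 3, 2 | 3, 3 => - 2^-1
  | 4, 0 | 4, 3 => 2^-1 | 4, 1 | 4, 2 => - 2^-1
  | 5, 4 => isqrt2 | 5, 5 => - isqrt2
  | _, _ => 0
  end.

Definition eigbasis : 'M[R]_6 := \matrix_(i < 6, j < 6) eigbasis_entry i j.

Definition spectrum (t1 tc ts : R) : 'rV[R]_6 :=
  \row_(j < 6) [:: 1; 1; (t1 + tc - ts) ^+ 2; (t1 + ts - tc) ^+ 2;
                   (t1 - ts - tc) ^+ 2; 0]`_j.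

Lemma etaA_row_sum (t1 tc ts : R) (i : 'I_6) : t1 + tc + ts = 1 ->
  \sum_(j < 6) etaA t1 tc ts i j = if (i < 4)%N then 1 else (2 * t1) ^+ 2.
Proof.
move=> hsum; have -> : ts = 1 - t1 - tc by rewrite -hsum; ring.
rewrite !big_ord_recl big_ord0 !mxE /bump /=.
by case: i => [[|[|[|[|[|[|i]]]]]] Hi] //=; ring.
Qed.

Lemma Dinvsqrt_etaA (t1 tc ts : R) : 0 < t1 -> t1 + tc + ts = 1 ->
  Dinvsqrt (etaA t1 tc ts) =
  diag_mx (\row_(i < 6) if (i < 4)%N then 1 else (2 * t1)^-1).
Proof.
move=> t1_gt0 hsum; congr diag_mx; apply/rowP => i.
rewrite !mxE etaA_row_sum //; case: ifP => _; first by rewrite sqrtr1 invr1.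
by rewrite sqrtr_sqr ger0_norm // mulr_ge0 // ltW.
Qed.

Lemma normA_eigbasis (t1 tc ts : R) : 0 < t1 -> t1 + tc + ts = 1 ->
  normA t1 tc ts *m eigbasis = eigbasis *m diag_mx (spectrum t1 tc ts).
Proof.
move=> t1_gt0 hsum; have t1_neq0 : t1 != 0 by rewrite gt_eqF.
have -> : ts = 1 - t1 - tc by rewrite -hsum; ring.
rewrite /normA Dinvsqrt_etaA //; last by rewrite -hsum; ring.
rewrite mul_mx_diag mul_diag_mx mul_mx_diag; apply/matrixP => i j.
rewrite !mxE !big_ord_recl big_ord0 !mxE /bump /=.
by case: i => [[|[|[|[|[|[|i]]]]]] Hi] //; case: j => [[|[|[|[|[|[|j]]]]]] Hj] //=;
  field.
Qed.

Lemma eigbasis_orthonormal : eigbasis^T *m eigbasis = 1%:M.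
Proof.
have r2 := isqrt2_sqr.
apply/matrixP => i j; rewrite !mxE !big_ord_recl big_ord0 !mxE /bump /=.
by case: i => [[|[|[|[|[|[|i]]]]]] Hi] //; case: j => [[|[|[|[|[|[|j]]]]]] Hj] //=;
  nra.
Qed.

Lemma normcols_hatU : normcols (hatU R) = leftcols (isT : (3 <= 6)%N) eigbasis.
Proof.
have sqrt4 : Num.sqrt (1 + (1 + (1 + 1))) = 2 :> R.
  by rewrite (_ : _ + _ = 2 ^+ 2) ?sqrtr_sqr ?ger0_norm //; ring.
apply/matrixP => i j; rewrite !mxE !big_ord_recl big_ord0 !mxE /bump /=.
case: i => [[|[|[|[|[|[|i]]]]]] Hi] //; case: j => [[|[|[|j]]] Hj] //=.
all: rewrite ?sqrrN ?expr0n ?expr1n /= ?add0r ?addr0 ?mul0r ?mulN1r ?div1r ?sqrt4 //.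
Qed.

Lemma spectrum_nonincreasing (t1 tc ts : R) :
  0 < ts -> ts < tc -> tc < t1 -> t1 + tc + ts = 1 ->
  nonincreasing_row (spectrum t1 tc ts).
Proof.
move=> ts_gt0 ts_lt_tc tc_lt_t1 sum1.
have sqr_sum : (t1 + tc + ts) ^+ 2 = 1 by rewrite sum1 expr1n.
have m3_le1 : (t1 + tc - ts) ^+ 2 <= 1.
  have : 0 <= ts * (t1 + tc) by apply: mulr_ge0; lra.
  nra.
have m4_le_m3 : (t1 + ts - tc) ^+ 2 <= (t1 + tc - ts) ^+ 2.
  have : 0 <= (tc - ts) * t1 by apply: mulr_ge0; lra.
  nra.
have m5_le_m4 : (t1 - ts - tc) ^+ 2 <= (t1 + ts - tc) ^+ 2.
  have : 0 <= ts * (t1 - tc) by apply: mulr_ge0; lra.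
  nra.
have m5_ge0 : 0 <= (t1 - ts - tc) ^+ 2 := sqr_ge0 _.
move=> i j; rewrite !mxE.
by case: i => [[|[|[|[|[|[|i]]]]]] Hi] //; case: j => [[|[|[|[|[|[|j]]]]]] Hj] //=; lra.
Qed.

Lemma spectrum_gap (t1 tc ts : R) :
  0 < ts -> ts < tc -> tc < t1 -> t1 + tc + ts = 1 ->
  forall i j : 'I_6, (3 <= i)%N -> (j < 3)%N ->
  spectrum t1 tc ts 0 i < spectrum t1 tc ts 0 j.
Proof.
move=> ts_gt0 ts_lt_tc tc_lt_t1 sum1.
have sqr_sum : (t1 + tc + ts) ^+ 2 = 1 by rewrite sum1 expr1n.
have m3_lt1 : (t1 + tc - ts) ^+ 2 < 1.
  have : 0 < ts * (t1 + tc) by apply: mulr_gt0; lra.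
  nra.
have m3_gt0 : 0 < (t1 + tc - ts) ^+ 2 by apply: exprn_gt0; lra.
have m4_lt_m3 : (t1 + ts - tc) ^+ 2 < (t1 + tc - ts) ^+ 2.
  have : 0 < (tc - ts) * t1 by apply: mulr_gt0; lra.
  nra.
have m5_lt_m3 : (t1 - ts - tc) ^+ 2 < (t1 + tc - ts) ^+ 2.
  have : 0 < tc * (t1 - ts) by apply: mulr_gt0; lra.
  nra.
move=> i j; rewrite !mxE.
by case: i => [[|[|[|[|[|[|i]]]]]] Hi] //; case: j => [[|[|[|j]]] Hj] //=; lra.
Qed.

Lemma third_eigenvalue_error (t1 tc ts : R) :
  0 < ts -> ts < tc -> 0 < t1 -> t1 + tc + ts = 1 ->
  `|(t1 + tc - ts) ^+ 2 - (1 - 4 * (ts / t1))| <= 12 * (tc / t1) ^+ 2.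
Proof.
move=> ts_gt0 ts_lt_tc t1_gt0 sum1.
have t1_neq0 : t1 != 0 by rewrite gt_eqF.
set x := tc / t1; set y := ts / t1.
have y_gt0 : 0 < y by rewrite divr_gt0.
have y_lt_x : y < x by rewrite ltr_pM2r ?invr_gt0.
have t1_le1 : t1 <= 1 by lra.
have -> : (t1 + tc - ts) ^+ 2 - (1 - 4 * y) =
    4 * (t1 ^+ 2 * y ^+ 2) + 4 * (t1 * (y * (x + y))).
  rewrite /x /y; have -> : ts = 1 - t1 - tc by rewrite -sum1; ring.
  by field.
have y2_le_x2 : y ^+ 2 <= x ^+ 2 by nra.
have t1y2_le : t1 ^+ 2 * y ^+ 2 <= x ^+ 2.
  have : 0 <= (1 - t1 ^+ 2) * y ^+ 2 by apply: mulr_ge0; nra.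
  nra.
have yxy_le : y * (x + y) <= 2 * x ^+ 2 by nra.
have t1yxy_le : t1 * (y * (x + y)) <= 2 * x ^+ 2.
  have : 0 <= (1 - t1) * (y * (x + y)) by apply: mulr_ge0; nra.
  nra.
have t1yxy_ge0 : 0 <= t1 * (y * (x + y)) by apply: mulr_ge0; nra.
by rewrite ger0_norm; nra.
Qed.

End NormalizedAffinity.

Theorem theorem7 (R : rcfType) :
  exists C delta : R, 0 < C /\ 0 < delta /\
  forall t1 tc ts : R,
    0 < t1 -> 0 < tc -> 0 < ts -> t1 + tc + ts = 1 ->
    0 < ts / t1 -> ts / t1 < tc / t1 -> tc / t1 < delta ->
    forall (V : 'M[R]_6) (lam : 'rV[R]_6),
      V^T *m V = 1%:M ->
      normA t1 tc ts *m V = V *m diag_mx lam ->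
      (forall i j : 'I_6, (i <= j)%N -> lam 0 j <= lam 0 i) ->
      (forall i : 'I_3,
          `|lam 0 (widen_ord (isT : (3 <= 6)%N) i) - hatlam t1 ts i|
            <= C * (tc / t1) ^+ 2) /\
      sinF (top3 V) (normcols (hatU R)) <= C * (tc ^+ 2 / (t1 * (tc - ts))).
Proof.
exists 12, 1; split=> //; split=> // t1 tc ts t1_gt0 _ ts_gt0 sum1 _.
rewrite ltr_pM2r ?invr_gt0 // ltr_pdivrMr // mul1r.
move=> ts_lt_tc tc_lt_t1 V lam VtV MV lam_dec.
have MP := normA_eigbasis t1_gt0 sum1.
have lamE : lam = spectrum t1 tc ts.
  apply: (sorted_eigenvalues_unique (eigbasis_orthonormal R) VtV MP MV) => //.
  exact: spectrum_nonincreasing.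
split.
  case=> [[|[|[|i]]] Hi] //; rewrite lamE mxE /hatlam /=.
  - by rewrite subrr normr0 mulr_ge0 ?sqr_ge0.
  - by rewrite subrr normr0 mulr_ge0 ?sqr_ge0.
  - exact: third_eigenvalue_error.
have -> : sinF (top3 V) (normcols (hatU R)) = 0.
  rewrite normcols_hatU; rewrite lamE in MV.
  apply: (leading_eigenspace_sinF_eq0 _ (eigbasis_orthonormal R) VtV MP MV).
  exact: spectrum_gap.
apply: mulr_ge0 => //; apply: divr_ge0; [exact: sqr_ge0 | apply: mulr_ge0; lra].
Qed.
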